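(* Let $T$ be an equilateral triangle. Then for every positive integer $n$, $$h(n,T)=\left\lfloor \frac{n}{3} \right\rfloor \cdot \left\lfloor \frac{n+1}{3} \right\rfloor \cdot \left\lfloor \frac{n+2}{3} \right\rfloor.$$
   Context: Let $T$ be a triangle with side lengths $a,b,c$, let $\varepsilon>0$ and $\varepsilon'=\varepsilon\cdot\min\{a,b,c\}$. A triangle $A'B'C'$ is $\varepsilon$-congruent to $T$ if there exist points $A,B,C\in\mathbb{R}^2$ such that $ABC$ is congruent to $T$ and $A',B',C'$ lie in the closed disks of radius $\varepsilon'$ around $A,B,C$ respectively. $h(n,T,\varepsilon)$ denotes the maximum, over all point sets $P\subseteq\mathbb{R}^2$ with $|P|=n$, of the number of 3-element subsets of $P$ forming a triangle $\varepsilon$-congruent to $T$, and $h(n,T):=\min_{\varepsilon>0}h(n,T,\varepsilon)$. *)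

From HB Require Import structures.
From mathcomp Require Import all_boot all_order all_algebra.
From mathcomp Require Import boolp.
From mathcomp Require Import Rstruct.
From Stdlib Require Import ClassicalEpsilon.
From Stdlib Require Rdefinitions.
Set Implicit Arguments. Unset Strict Implicit. Unset Printing Implicit Defensive.
Import Order.TTheory GRing.Theory Num.Theory.
Local Open Scope ring_scope.

Notation R := Rdefinitions.R.

Definition pt := (R * R)%type.

Definition dist (p q : pt) : R :=
  Num.sqrt ((p.1 - q.1) ^+ 2 + (p.2 - q.2) ^+ 2).

(* triangle ABC is congruent to the triangle T with side lengths a b c
   (a = |BC|, b = |CA|, c = |AB|) *)
Definition congr_T (a b c : R) (A B C : pt) : Prop :=
  dist B C = a /\ dist C A = b /\ dist A B = c.

Definition eps_congr (a b c eps : R) (A' B' C' : pt) : Prop :=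
  let e' := eps * Num.min a (Num.min b c) in
  exists A B C : pt, congr_T a b c A B C /\
    dist A' A <= e' /\ dist B' B <= e' /\ dist C' C <= e'.

(* number of 3-element subsets of the n-point set P = image of the injective
   p : 'I_n -> pt that form a triangle eps-congruent to T *)
Definition count_eps (n : nat) (p : 'I_n -> pt) (a b c eps : R) : nat :=
  #|[set S : {set 'I_n} | (#|S| == 3)%N &&
     `[< exists i j k : 'I_n, S = [set i; j; k] /\
           eps_congr a b c eps (p i) (p j) (p k) >] ]|.

Definition is_h_eps (n : nat) (a b c eps : R) (m : nat) : Prop :=
  (exists p : 'I_n -> pt, injective p /\ count_eps p a b c eps = m) /\
  (forall p : 'I_n -> pt, injective p -> (count_eps p a b c eps <= m)%N).

Definition h_eps (n : nat) (a b c eps : R) : nat :=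
  epsilon (inhabits 0%N) (is_h_eps n a b c eps).

Definition is_h (n : nat) (a b c : R) (m : nat) : Prop :=
  (exists eps : R, 0 < eps /\ h_eps n a b c eps = m) /\
  (forall eps : R, 0 < eps -> (m <= h_eps n a b c eps)%N).

Definition h (n : nat) (a b c : R) : nat :=
  epsilon (inhabits 0%N) (is_h n a b c).

From mathcomp Require Import all_boot all_order all_algebra.
From mathcomp Require Import Rstruct ring lra boolp zify.
From Stdlib Require Import ClassicalEpsilon.
Set Implicit Arguments. Unset Strict Implicit. Unset Printing Implicit Defensive.
Import Order.TTheory GRing.Theory Num.Theory.

(* Lower bound: put floor(n/3), floor((n+1)/3) and floor((n+2)/3) points in tiny
   clusters around the three vertices of a copy of T; every triple with one point in
   each cluster is eps-congruent to T.
   Upper bound, for eps <= 1/500: join two points when their distance is within 2 eps s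
   of s.  Every eps-congruent triple is a triangle of this graph, and the graph has no
   K4: for four points with all six squared distances close to s^2, the Gram
   determinant of the three edge vectors at one of them is close to that of a regular
   tetrahedron, hence positive, whereas it vanishes for points of the plane.  A K4-free
   graph on m vertices has at most floor(m/3) floor((m+1)/3) floor((m+2)/3) triangles
   (and at most floor(m^2/3) edges), by induction removing a triangle X: a triangle
   meeting X is determined by its at most two vertices outside X, which form a clique. *)

Definition turan3 (n : nat) : nat := n %/ 3 * ((n + 1) %/ 3) * ((n + 2) %/ 3).

Lemma divn3_sum n : n %/ 3 + (n + 1) %/ 3 + (n + 2) %/ 3 = n.
Proof. lia. Qed.

Lemma sqr_divn3_add3 m : m * m %/ 3 + 2 * m + 3 = (m + 3) * (m + 3) %/ 3.
Proof. nia. Qed.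

Lemma sqr_divn3_add2 m : m * m %/ 3 + m + 1 <= (m + 2) * (m + 2) %/ 3.
Proof. nia. Qed.

Lemma turan3_add3 m : turan3 m + m * m %/ 3 + m + 1 <= turan3 (m + 3).
Proof.
(* With a + b + c = m balanced, turan3 (m + 3) - turan3 m = ab + bc + ca + m + 1, and
   m^2 - 3 (ab + bc + ca) = ((a - b)^2 + (b - c)^2 + (c - a)^2) / 2 <= 1. *)
rewrite /turan3.
have -> : (m + 3) %/ 3 = m %/ 3 + 1 by lia.
have -> : (m + 3 + 1) %/ 3 = (m + 1) %/ 3 + 1 by lia.
have -> : (m + 3 + 2) %/ 3 = (m + 2) %/ 3 + 1 by lia.
have := leq_divM (m * m) 3; have := divn3_sum m.
have : [&& m %/ 3 <= (m + 1) %/ 3, (m + 1) %/ 3 <= (m + 2) %/ 3 & (m + 2) %/ 3 <= m %/ 3 + 1].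
  by apply/and3P; split; lia.
move: (m %/ 3) ((m + 1) %/ 3) ((m + 2) %/ 3) (m * m %/ 3) => a b c d.
by move=> /and3P[ab bc ca] <-; nia.
Qed.

Lemma card_bigcup_le (I T : finType) (A : {set I}) (F : I -> {set T}) :
  #|\bigcup_(i in A) F i| <= \sum_(i in A) #|F i|.
Proof.
elim/big_rec2: _ => [|i n U _ leUn]; first by rewrite cards0.
by rewrite (leq_trans (leq_card_setU _ _).1) ?leq_add2l.
Qed.

Section Cliques.
Variables (V : finType) (adj : rel V).

Definition clique (S : {set V}) : bool :=
  [forall x in S, forall y in S, (x != y) ==> adj x y].

Definition cliques (k : nat) (U : {set V}) : {set {set V}} :=
  [set S : {set V} | [&& S \subset U, #|S| == k & clique S]].

Definition nbhd (x : V) (U : {set V}) : {set V} := [set v in U | adj x v].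

Lemma cliqueP (S : {set V}) :
  reflect (forall x y, x \in S -> y \in S -> x != y -> adj x y) (clique S).
Proof.
apply: (iffP forall_inP) => [cS x y xS yS xy | cS x xS].
  by move/forall_inP/(_ y yS)/implyP: (cS x xS); apply.
by apply/forall_inP => y yS; apply/implyP; apply: cS.
Qed.

Lemma clique_subset (S T : {set V}) : S \subset T -> clique T -> clique S.
Proof.
by move=> /subsetP ST /cliqueP cT; apply/cliqueP => x y /ST xT /ST yT; apply: cT.
Qed.

Lemma card_cliques_le k (U : {set V}) : #|cliques k U| <= 'C(#|U|, k).
Proof.
rewrite -cards_draws; apply/subset_leq_card/subsetP => S.
by rewrite !inE => /and3P[-> -> _].
Qed.

Lemma card_cliques_setD k (X U : {set V}) :
  X \in cliques k U -> #|U| = #|U :\: X| + k.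
Proof.
by rewrite inE => /and3P[XU /eqP <- _]; rewrite -(cardsID X U) (setIidPr XU) addnC.
Qed.

Lemma clique_setU_of_setD (X S1 S2 : {set V}) : clique X -> clique S1 -> clique S2 ->
  S1 :\: X = S2 :\: X -> clique (S1 :|: S2).
Proof.
move=> /cliqueP cX /cliqueP c1 /cliqueP c2 eD.
have both v : v \in S1 :|: S2 -> v \notin X -> (v \in S1) && (v \in S2).
  move=> vS vX; have := congr1 (fun A : {set V} => v \in A) eD; rewrite !inE vX /= => e.
  by case/setUP: vS => vS; [rewrite -e vS | rewrite e vS].
apply/cliqueP => a b aS bS ab.
have [aX|/(both a aS)/andP[a1 a2]] := boolP (a \in X); last first.
  by case/setUP: bS => bS; [exact: c1 | exact: c2].
have [bX|/(both b bS)/andP[b1 b2]] := boolP (b \in X); first exact: cX.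
by case/setUP: aS => aS; [exact: c1 | exact: c2].
Qed.

Hypothesis adj_sym : symmetric adj.

Lemma card_edges_setD k (X U : {set V}) : X \in cliques k U -> cliques k.+1 U = set0 ->
  #|cliques 2 U| <= #|cliques 2 (U :\: X)| + 'C(k, 2) + k.-1 * #|U :\: X|.
Proof.
move=> Xk; have := Xk; rewrite inE => /and3P[XU /eqP cardX cX] no_ext.
set U' := U :\: X.
have nbhd_lt v : v \in U' -> #|nbhd v X| < k.
  rewrite inE => /andP[vX vU]; rewrite -cardX; apply: proper_card.
  rewrite properEneq andbC; apply/andP; split.
    by apply/subsetP => x; rewrite inE => /andP[].
  apply/eqP => eX; suff : v |: X \in cliques k.+1 U by rewrite no_ext inE.
  rewrite inE subUset sub1set vU XU cardsU1 vX cardX add1n eqxx /=.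
  apply/cliqueP => a b /setU1P[->|aX] /setU1P[->|bX] ab;
    first by rewrite eqxx in ab.
  - by move: bX; rewrite -eX inE => /andP[].
  - by move: aX; rewrite -eX inE adj_sym => /andP[].
  - by move/cliqueP: cX; apply.
have cover : cliques 2 U \subset
    cliques 2 U' :|: cliques 2 X :|: \bigcup_(v in U') [set [set x; v] | x in nbhd v X].
  apply/subsetP => S; rewrite inE => /and3P[SU /cards2P[a [b [ab eS]]] cS].
  have [aS bS] : a \in S /\ b \in S by rewrite eS !inE !eqxx orbT.
  have [aU bU] := (subsetP SU a aS, subsetP SU b bS).
  have [adj_ab adj_ba] : adj a b /\ adj b a.
    by move/cliqueP: cS => cS; split; apply: cS; rewrite // eq_sym.
  have [aX|aX] := boolP (a \in X); have [bX|bX] := boolP (b \in X).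
  - apply/setUP; left; apply/setUP; right.
    by rewrite inE cS eS subUset !sub1set aX bX cards2 ab.
  - apply/setUP; right; apply/bigcupP; exists b; first by rewrite inE bX bU.
    by apply/imsetP; exists a; rewrite ?eS // inE aX adj_ba.
  - apply/setUP; right; apply/bigcupP; exists a; first by rewrite inE aX aU.
    by apply/imsetP; exists b; rewrite ?eS 1?setUC // inE bX adj_ab.
  - apply/setUP; left; apply/setUP; left.
    by rewrite inE cS eS subUset !sub1set !inE aX bX aU bU cards2 ab.
have card_inner : #|cliques 2 X| <= 'C(k, 2) by rewrite -cardX card_cliques_le.
have card_cross : #|\bigcup_(v in U') [set [set x; v] | x in nbhd v X]| <= k.-1 * #|U'|.
  apply: (leq_trans (card_bigcup_le _ _)).
  rewrite mulnC -sum_nat_const; apply: leq_sum => v vU'.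
  by apply: (leq_trans (leq_imset_card _ _)); have := nbhd_lt v vU'; lia.
apply: (leq_trans (subset_leq_card cover)).
rewrite (leq_trans (leq_card_setU _ _).1) // leq_add //.
by rewrite (leq_trans (leq_card_setU _ _).1) // leq_add2l.
Qed.

Hypothesis K4_free : forall a b c d,
  adj a b -> adj a c -> adj a d -> adj b c -> adj b d -> adj c d -> False.

Lemma clique_card_le3 (S : {set V}) : clique S -> #|S| <= 3.
Proof.
move=> /cliqueP cS; rewrite leqNgt; apply/negP => S4.
have [x0 _] : exists x0, x0 \in S by apply/card_gt0P; apply: leq_trans S4.
pose e i := nth x0 (enum S) i.
have adj_e i j : i < 4 -> j < 4 -> i != j -> adj (e i) (e j).
  move=> i4 j4 ij; have [iS jS] : i < size (enum S) /\ j < size (enum S).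
    by rewrite -cardE; split; apply: leq_trans S4.
  by apply: cS; rewrite ?nth_uniq ?enum_uniq // -mem_enum mem_nth.
exact: (K4_free (adj_e 0 1 _ _ _) (adj_e 0 2 _ _ _) (adj_e 0 3 _ _ _)
                (adj_e 1 2 _ _ _) (adj_e 1 3 _ _ _) (adj_e 2 3 _ _ _)).
Qed.

Lemma cliques4_eq0 (U : {set V}) : cliques 4 U = set0.
Proof.
apply/setP => S; rewrite !inE; apply/negbTE.
by apply/and3P => -[_ /eqP S4 /clique_card_le3]; rewrite S4.
Qed.

Lemma card_triangles_setD (X U : {set V}) : clique X ->
  #|cliques 3 U| <= #|cliques 3 (U :\: X)| + 1 + #|U :\: X| + #|cliques 2 (U :\: X)|.
Proof.
move=> cX; set U' := U :\: X.
set M := [set S in cliques 3 U | ~~ [disjoint S & X]].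
have cover : cliques 3 U \subset cliques 3 U' :|: M.
  apply/subsetP => S S3; rewrite in_setU [S \in M]inE S3 /=.
  have [dSX|] := boolP [disjoint S & X]; last by rewrite orbT.
  by move: S3; rewrite /= orbF !inE /U' subsetD dSX andbT.
have M_inj : {in M &, injective (fun S => S :\: X)}.
  move=> S1 S2; rewrite !inE => /andP[/and3P[_ /eqP card1 c1] _].
  move=> /andP[/and3P[_ /eqP card2 c2] _] eD.
  have le3 := clique_card_le3 (clique_setU_of_setD cX c1 c2 eD).
  have e1 : S1 :|: S2 = S1 by apply/eqP; rewrite eq_sym eqEcard subsetUl card1.
  have e2 : S2 :|: S1 = S2 by apply/eqP; rewrite eq_sym eqEcard subsetUl card2 setUC.
  by rewrite -[LHS]e1 -[RHS]e2 setUC.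
have M_img : [set S :\: X | S in M] \subset cliques 0 U' :|: cliques 1 U' :|: cliques 2 U'.
  apply/subsetP => Y /imsetP[S SM ->]; move: SM.
  rewrite !inE => /andP[/and3P[SU /eqP S3 cS] SX].
  have meet : 0 < #|S :&: X| by rewrite card_gt0 setI_eq0.
  have := cardsID X S; rewrite S3 setSD // (clique_subset (subsetDl S X) cS).
  by rewrite !andbT; lia.
have card_small : #|cliques 0 U' :|: cliques 1 U' :|: cliques 2 U'|
    <= 1 + #|U'| + #|cliques 2 U'|.
  have c0 := card_cliques_le 0 U'; have c1 := card_cliques_le 1 U'.
  rewrite bin0 in c0; rewrite bin1 in c1.
  rewrite (leq_trans (leq_card_setU _ _).1) // leq_add2r.
  by rewrite (leq_trans (leq_card_setU _ _).1) // leq_add.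
apply: (leq_trans (subset_leq_card cover)).
rewrite (leq_trans (leq_card_setU _ _).1) // -!addnA leq_add2l !addnA.
by rewrite -(card_in_imset M_inj) (leq_trans (subset_leq_card M_img)).
Qed.

Lemma card_edges_K4free (U : {set V}) : #|cliques 2 U| <= #|U| * #|U| %/ 3.
Proof.
have [m] := ubnP #|U|; elim: m U => // m IH U /ltnSE leUm.
have [no3|/set0Pn[X X3]] := eqVneq (cliques 3 U) set0.
  have [no2|/set0Pn[X X2]] := eqVneq (cliques 2 U) set0; first by rewrite no2 cards0.
  rewrite (card_cliques_setD X2) in leUm *.
  apply: (leq_trans (card_edges_setD X2 no3)); apply: leq_trans (sqr_divn3_add2 _).
  by rewrite binn mul1n addnAC !leq_add2r; apply: IH; lia.
rewrite (card_cliques_setD X3) in leUm *.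
apply: (leq_trans (card_edges_setD X3 (cliques4_eq0 U))); rewrite -sqr_divn3_add3.
by rewrite addnAC !leq_add2r; apply: IH; lia.
Qed.

Lemma card_triangles_K4free (U : {set V}) : #|cliques 3 U| <= turan3 #|U|.
Proof.
have [m] := ubnP #|U|; elim: m U => // m IH U /ltnSE leUm.
have [->|/set0Pn[X X3]] := eqVneq (cliques 3 U) set0; first by rewrite cards0.
have cX : clique X by move: X3; rewrite inE => /and3P[].
have IHX := IH (U :\: X); have := card_triangles_setD U cX.
have := card_edges_K4free (U :\: X); have := turan3_add3 #|U :\: X|.
rewrite (card_cliques_setD X3) in leUm *.
by move: (_ %/ 3) => q; lia.
Qed.

End Cliques.

Local Open Scope ring_scope.

Definition nearly (r t x : R) : bool := r * (1 - t) <= x <= r * (1 + t).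

Lemma dist_ge0 (p q : pt) : 0 <= dist p q.
Proof. exact: sqrtr_ge0. Qed.

Lemma distC (p q : pt) : dist p q = dist q p.
Proof. by rewrite /dist; congr Num.sqrt; ring. Qed.

Lemma dist_sqr (p q : pt) : dist p q ^+ 2 = (p.1 - q.1) ^+ 2 + (p.2 - q.2) ^+ 2.
Proof. by rewrite sqr_sqrtr // addr_ge0 // sqr_ge0. Qed.

Lemma cauchy_schwarz2 (a b c d : R) :
  a * b + c * d <= Num.sqrt (a ^+ 2 + c ^+ 2) * Num.sqrt (b ^+ 2 + d ^+ 2).
Proof.
set X := Num.sqrt _; set Y := Num.sqrt _.
have XY0 : 0 <= X * Y by rewrite mulr_ge0 ?sqrtr_ge0.
have XY : (X * Y) ^+ 2 = (a ^+ 2 + c ^+ 2) * (b ^+ 2 + d ^+ 2).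
  by rewrite exprMn !sqr_sqrtr // addr_ge0 // sqr_ge0.
have : (a * b + c * d) ^+ 2 <= (X * Y) ^+ 2.
  by rewrite XY; have := sqr_ge0 (a * d - b * c); lra.
nra.
Qed.

Lemma dist_triangle (p q r : pt) : dist p r <= dist p q + dist q r.
Proof.
have cs : (p.1 - q.1) * (q.1 - r.1) + (p.2 - q.2) * (q.2 - r.2) <= dist p q * dist q r.
  exact: cauchy_schwarz2.
rewrite -(ger0_norm (addr_ge0 (dist_ge0 p q) (dist_ge0 q r))) -sqrtr_sqr.
apply: ler_wsqrtr; have := dist_sqr p q; have := dist_sqr q r; nra.
Qed.

Lemma nearly_dist (s e : R) (P Q A B : pt) :
  dist P A <= e * s -> dist Q B <= e * s -> dist A B = s -> nearly s (2 * e) (dist P Q).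
Proof.
move=> PA QB AB; have := dist_triangle A P B; have := dist_triangle P Q B.
have := dist_triangle P A Q; have := dist_triangle A B Q.
rewrite (distC A P) (distC B Q) /nearly; move=> *; apply/andP; split; lra.
Qed.

Lemma nearly_sqr (r e x : R) : 0 <= r -> 0 <= e <= 1 / 4 ->
  nearly r (2 * e) x -> nearly (r ^+ 2) (5 * e) (x ^+ 2).
Proof.
move=> r0 /andP[e0 e1] /andP[lo hi].
have lo0 : 0 <= r * (1 - 2 * e) by rewrite mulr_ge0 //; lra.
have sq_lo : (r * (1 - 2 * e)) ^+ 2 <= x ^+ 2 by rewrite !expr2 ler_pM.
have sq_hi : x ^+ 2 <= (r * (1 + 2 * e)) ^+ 2 by rewrite !expr2 ler_pM //; lra.
have ree0 : 0 <= r ^+ 2 * (e * e) by rewrite !mulr_ge0 ?sqr_ge0.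
have re0 : 0 <= r ^+ 2 * e by rewrite mulr_ge0 ?sqr_ge0.
have ree : r ^+ 2 * (e * e) <= r ^+ 2 * (e / 4) by rewrite ler_wpM2l ?sqr_ge0 //; nra.
by apply/andP; split; lra.
Qed.

Lemma nearly_polar (r t x y z : R) :
  nearly r t x -> nearly r t y -> nearly r t z -> nearly r (3 * t) (x + y - z).
Proof. by move=> /andP[? ?] /andP[? ?] /andP[? ?]; apply/andP; split; lra. Qed.

(* Four times the Gram determinant of three vectors u1, u2, u3 with g_i = |u_i|^2 and
   h_ij = 2 u_i.u_j; for u = b - a, c - a, d - a one has h_ij = g_i + g_j - |u_i - u_j|^2. *)
Definition gram3 (g1 g2 g3 h12 h13 h23 : R) : R :=
  4 * (g1 * g2 * g3) + h12 * h13 * h23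
  - g1 * h23 ^+ 2 - g2 * h13 ^+ 2 - g3 * h12 ^+ 2.

Lemma gram3_planar (a b c d : pt) :
  let D p q := dist p q ^+ 2 in
  gram3 (D a b) (D a c) (D a d)
    (D a b + D a c - D b c) (D a b + D a d - D b d) (D a c + D a d - D c d) = 0.
Proof. by rewrite /= !dist_sqr /gram3; ring. Qed.

Lemma gram3_gt0 (r t g1 g2 g3 h12 h13 h23 : R) : 0 < r -> 0 <= t <= 1 / 100 ->
  nearly r t g1 -> nearly r t g2 -> nearly r t g3 ->
  nearly r (3 * t) h12 -> nearly r (3 * t) h13 -> nearly r (3 * t) h23 ->
  0 < gram3 g1 g2 g3 h12 h13 h23.
Proof.
move=> r0 /andP[t0 t1] /andP[lo1 hi1] /andP[lo2 hi2] /andP[lo3 hi3].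
move=> /andP[lo12 hi12] /andP[lo13 hi13] /andP[lo23 hi23].
set L := r * (1 - t) in lo1 lo2 lo3; set H := r * (1 + t) in hi1 hi2 hi3.
set l := r * (1 - 3 * t) in lo12 lo13 lo23; set h := r * (1 + 3 * t) in hi12 hi13 hi23.
have [L0 l0] : 0 <= L /\ 0 <= l by split; rewrite mulr_ge0 //; lra.
have cube_le (lo x y z : R) :
    0 <= lo -> lo <= x -> lo <= y -> lo <= z -> lo ^+ 3 <= x * y * z.
  move=> lo0 lx ly lz; have -> : lo ^+ 3 = lo * lo * lo by ring.
  by rewrite !ler_pM ?mulr_ge0 //; apply: le_trans lo0 _.
have mixed_le (x y : R) : L <= x -> x <= H -> l <= y -> y <= h -> x * y ^+ 2 <= H * h ^+ 2.
  move=> Lx xH ly yh; rewrite ler_pM ?sqr_ge0 //; first exact: le_trans Lx.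
  by rewrite !expr2 ler_pM //; apply: le_trans ly.
have key : 4 * L ^+ 3 + l ^+ 3 - 3 * (H * h ^+ 2)
    = r ^+ 3 * (2 - 42 * t - 6 * t ^+ 2 - 58 * t ^+ 3).
  by rewrite /L /l /H /h; ring.
have : 0 < r ^+ 3 * (2 - 42 * t - 6 * t ^+ 2 - 58 * t ^+ 3).
  by rewrite mulr_gt0 ?exprn_gt0 //; rewrite !exprS expr0 mulr1; nra.
have := cube_le L g1 g2 g3 L0 lo1 lo2 lo3; have := cube_le l h12 h13 h23 l0 lo12 lo13 lo23.
have := mixed_le g1 h23 lo1 hi1 lo23 hi23; have := mixed_le g2 h13 lo2 hi2 lo13 hi13.
have := mixed_le g3 h12 lo3 hi3 lo12 hi12.
rewrite /gram3; lra.
Qed.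

Lemma planar_not_nearly_equidistant4 (r t : R) (a b c d : pt) :
  0 < r -> 0 <= t <= 1 / 100 ->
  nearly r t (dist a b ^+ 2) -> nearly r t (dist a c ^+ 2) -> nearly r t (dist a d ^+ 2) ->
  nearly r t (dist b c ^+ 2) -> nearly r t (dist b d ^+ 2) -> nearly r t (dist c d ^+ 2) ->
  False.
Proof.
move=> r0 t01 ab ac ad bc bd cd.
have := gram3_gt0 r0 t01 ab ac ad
  (nearly_polar ab ac bc) (nearly_polar ab ad bd) (nearly_polar ac ad cd).
by rewrite gram3_planar ltxx.
Qed.

Definition near_graph (n : nat) (p : 'I_n -> pt) (s eps : R) : rel 'I_n :=
  fun i j => (i != j) && nearly s (2 * eps) (dist (p i) (p j)).

Lemma near_graph_sym n (p : 'I_n -> pt) (s eps : R) : symmetric (near_graph p s eps).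
Proof. by move=> i j; rewrite /near_graph eq_sym distC. Qed.

Lemma near_graph_K4_free n (p : 'I_n -> pt) (s eps : R) : 0 < s -> 0 <= eps <= 1 / 500 ->
  forall a b c d, near_graph p s eps a b -> near_graph p s eps a c ->
  near_graph p s eps a d -> near_graph p s eps b c -> near_graph p s eps b d ->
  near_graph p s eps c d -> False.
Proof.
move=> s0 /andP[e0 e1] a b c d.
have sq x : nearly s (2 * eps) x -> nearly (s ^+ 2) (5 * eps) (x ^+ 2).
  by apply: nearly_sqr; [exact: ltW | apply/andP; split; lra].
move=> /andP[_ /sq ab] /andP[_ /sq ac] /andP[_ /sq ad] /andP[_ /sq bc] /andP[_ /sq bd].
move=> /andP[_ /sq cd]; apply: planar_not_nearly_equidistant4 ab ac ad bc bd cd.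
  by rewrite exprn_gt0.
by apply/andP; split; lra.
Qed.

Lemma eps_congr_nearly (s eps : R) (P Q T : pt) : eps_congr s s s eps P Q T ->
  [&& nearly s (2 * eps) (dist P Q), nearly s (2 * eps) (dist Q T)
    & nearly s (2 * eps) (dist P T)].
Proof.
rewrite /eps_congr !minxx => -[A [B [C [[BC [CA AB]] [PA [QB TC]]]]]].
rewrite (nearly_dist PA QB AB) (nearly_dist QB TC BC) (nearly_dist PA TC) //.
by rewrite distC.
Qed.

Lemma count_eps_le_turan3 n (p : 'I_n -> pt) (s eps : R) :
  0 < s -> 0 <= eps <= 1 / 500 -> (count_eps p s s s eps <= turan3 n)%N.
Proof.
move=> s0 e01.
have := card_triangles_K4free (@near_graph_sym _ p s eps)
  (near_graph_K4_free (p := p) s0 e01) setT.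
rewrite cardsT card_ord; apply: leq_trans; apply/subset_leq_card/subsetP => S.
rewrite !inE subsetT => /andP[-> /asboolP[i [j [k [-> /eps_congr_nearly/and3P[ij jk ik]]]]]] /=.
apply/cliqueP => x y hx hy xy; rewrite /near_graph xy /=.
move: hx hy xy; rewrite !inE => /orP[/orP[]|] /eqP-> /orP[/orP[]|] /eqP->;
  by rewrite ?eqxx // distC.
Qed.

Definition cluster (n i : nat) : nat :=
  if (i < n %/ 3)%N then 0 else if (i < n %/ 3 + (n + 1) %/ 3)%N then 1 else 2.

Definition equilateral_vertex (s : R) (k : nat) : pt :=
  if k is 0 then (0, 0) else if k is 1 then (s, 0) else (s / 2, s * Num.sqrt 3 / 2).

(* The vertical offsets make the configuration injective, and stay below eps s. *)
Definition cluster_config (s eps : R) (n : nat) (i : 'I_n) : pt :=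
  let v := equilateral_vertex s (cluster n i) in (v.1, v.2 + eps * s * i%:R / n%:R).

Lemma equilateral_congr (s : R) : 0 <= s ->
  congr_T s s s (equilateral_vertex s 0) (equilateral_vertex s 1) (equilateral_vertex s 2).
Proof.
move=> s0; have sqrt3 : Num.sqrt 3 ^+ 2 = 3 :> R by rewrite sqr_sqrtr.
have dist_s (P Q : pt) : (P.1 - Q.1) ^+ 2 + (P.2 - Q.2) ^+ 2 = s ^+ 2 -> dist P Q = s.
  by move=> e; rewrite /dist e sqrtr_sqr ger0_norm.
by split; [|split]; apply: dist_s => /=; rewrite ?subr0 ?sub0r ?sqrrN ?exprMn ?sqrt3; field.
Qed.

Lemma cluster_config_close (s eps : R) n (i : 'I_n) : 0 <= s -> 0 <= eps ->
  dist (cluster_config s eps i) (equilateral_vertex s (cluster n i)) <= eps * s.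
Proof.
move=> s0 e0; have n0 : (0 < n)%N by apply: leq_ltn_trans (ltn_ord i).
rewrite /dist /=.
have -> : forall x y d : R, (x - x) ^+ 2 + (y + d - y) ^+ 2 = d ^+ 2 by move=> *; ring.
rewrite sqrtr_sqr ger0_norm ?divr_ge0 ?mulr_ge0 ?ler0n // -mulrA ler_piMr ?mulr_ge0 //.
by rewrite ler_pdivrMr ?ltr0n // mul1r ler_nat ltnW.
Qed.

Lemma equilateral_vertex_fst_inj (s : R) (k l : nat) : 0 < s -> (k < 3)%N -> (l < 3)%N ->
  (equilateral_vertex s k).1 = (equilateral_vertex s l).1 -> k = l.
Proof.
by move=> s0; case: k => [|[|[|k]]]; case: l => [|[|[|l]]] //= _ _ e; exfalso; lra.
Qed.

Lemma cluster_lt3 n i : (cluster n i < 3)%N.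
Proof. by rewrite /cluster; case: ifP => // _; case: ifP. Qed.

Lemma cluster_config_inj (s eps : R) n : 0 < s -> 0 < eps -> injective (@cluster_config s eps n).
Proof.
move=> s0 e0 i j; rewrite /cluster_config => -[/equilateral_vertex_fst_inj ek].
rewrite ek ?cluster_lt3 // => /addrI/mulIf; rewrite invr_eq0 pnatr_eq0 -lt0n.
move=> /(_ (leq_ltn_trans (leq0n _) (ltn_ord i)))/mulfI; rewrite mulf_neq0 ?gt_eqF //.
by move=> /(_ isT)/eqP; rewrite eqr_nat => /eqP/val_inj.
Qed.

Lemma cluster_config_eps_congr (s eps : R) n (x y z : 'I_n) : 0 <= s -> 0 <= eps ->
  cluster n x = 0%N -> cluster n y = 1%N -> cluster n z = 2%N ->
  eps_congr s s s eps (cluster_config s eps x) (cluster_config s eps y)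
    (cluster_config s eps z).
Proof.
move=> s0 e0 cx cy cz; rewrite /eps_congr !minxx.
have close k (i : 'I_n) : cluster n i = k ->
    dist (cluster_config s eps i) (equilateral_vertex s k) <= eps * s.
  by move=> <-; apply: cluster_config_close.
exists (equilateral_vertex s 0), (equilateral_vertex s 1), (equilateral_vertex s 2).
by split; [exact: equilateral_congr | split; [|split]; apply: close].
Qed.

Lemma turan3_le_count_eps (s eps : R) n : 0 <= s -> 0 <= eps ->
  (turan3 n <= count_eps (@cluster_config s eps n) s s s eps)%N.
Proof.
move=> s0 e0; pose o := cast_ord (divn3_sum n).
pose F (t : 'I_(n %/ 3) * 'I_((n + 1) %/ 3) * 'I_((n + 2) %/ 3)) : {set 'I_n} :=
  [set o (lshift _ (lshift _ t.1.1)); o (lshift _ (rshift _ t.1.2)); o (rshift _ t.2)].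
have F_inj : injective F.
  move=> [[i j] k] [[i' j'] k'] eF.
  have mem x : x \in F (i, j, k) -> x \in F (i', j', k') by rewrite eF.
  have := mem (o (lshift _ (lshift _ i))); have := mem (o (lshift _ (rshift _ j))).
  have := mem (o (rshift _ k)); rewrite !inE !eqxx ?orbT -!val_eqE /=.
  move: (ltn_ord i) (ltn_ord j) (ltn_ord k) (ltn_ord i') (ltn_ord j') (ltn_ord k').
  by move=> *; congr (_, _, _); apply: val_inj => /=; lia.
have -> : turan3 n = #|[set: 'I_(n %/ 3) * 'I_((n + 1) %/ 3) * 'I_((n + 2) %/ 3)]|.
  by rewrite cardsT !card_prod !card_ord.
rewrite -(card_imset _ F_inj); apply/subset_leq_card/subsetP => _ /imsetP[[[i j] k] _ ->].
move: (ltn_ord i) (ltn_ord j) (ltn_ord k) => li lj lk.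
rewrite inE; apply/andP; split.
  by rewrite /F setUC cardsU1 cards2 !inE -!val_eqE /=; lia.
apply/asboolP; do 3 eexists; split; first reflexivity.
by apply: cluster_config_eps_congr; rewrite // /cluster /=;
  repeat case: ifP => ?; lia.
Qed.

Lemma h_epsP n (a b c eps : R) : is_h_eps n a b c eps (h_eps n a b c eps).
Proof.
apply: epsilon_spec.
pose P m := `[< exists p : 'I_n -> pt, injective p /\ count_eps p a b c eps = m >].
have inj0 : injective (fun i : 'I_n => (i%:R, 0) : pt).
  by move=> i j [/eqP]; rewrite eqr_nat => /eqP/val_inj.
have P0 : exists m, P m by eexists; apply/asboolP; exists (fun i : 'I_n => (i%:R, 0)).
have P_ub m : P m -> (m <= #|{set 'I_n}|)%N.
  by move=> /asboolP[p [_ <-]]; exact: max_card.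
have [m Pm m_max] := ex_maxnP P0 P_ub.
exists m; split; first exact/asboolP.
by move=> p p_inj; apply: m_max; apply/asboolP; exists p.
Qed.

Lemma h_eps_eq n (a b c eps : R) m : is_h_eps n a b c eps m -> h_eps n a b c eps = m.
Proof.
move=> [[p [p_inj <-]] p_max]; have [[q [q_inj <-]] q_max] := h_epsP n a b c eps.
by apply/eqP; rewrite eqn_leq p_max // q_max.
Qed.

Lemma h_eq n (a b c : R) m : is_h n a b c m -> h n a b c = m.
Proof.
move=> hm; have : is_h n a b c (h n a b c) := epsilon_spec _ _ (ex_intro _ m hm).
move: hm => [[e [e0 <-]] e_min] [[e' [e0' he']] e'_min].
by apply/eqP; rewrite eqn_leq e'_min // -he' e_min.
Qed.

Theorem theorem1p1 (s : R) (hs : 0 < s) (n : nat) (hn : (0 < n)%N) :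
  h n s s s = (n %/ 3 * ((n + 1) %/ 3) * ((n + 2) %/ 3))%N.
Proof.
rewrite -/(turan3 n).
have e_ok : 0 <= (1 / 500 : R) <= 1 / 500 by apply/andP; split; lra.
apply: h_eq; split.
  exists (1 / 500); split; first lra.
  apply: h_eps_eq; split => [|p _]; last exact: count_eps_le_turan3.
  exists (cluster_config s (1 / 500) (n := n)); split.
    by apply: cluster_config_inj; lra.
  apply/eqP; rewrite eqn_leq count_eps_le_turan3 // turan3_le_count_eps //; lra.
move=> eps eps0; have [_ eps_max] := h_epsP n s s s eps.
exact: leq_trans (turan3_le_count_eps _ (ltW hs) (ltW eps0))
  (eps_max _ (cluster_config_inj hs eps0)).
Qed.
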